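(* Let $(\mathcal{V},g)$ be a finite-dimensional real scalar product space, let $J_1,\dots,J_m$ be skew-adjoint endomorphisms of $\mathcal{V}$ with $J_iJ_j+J_jJ_i=2c_i\delta_{ij}\,\mathrm{id}$ for $1\le i,j\le m$, where $c_i\in\{-1,1\}$, and let $\mu_0,\dots,\mu_m\in\mathbb{R}$. If $(3c_i\mu_i+\mu_0)\mu_i>0$ for all $1\le i\le m$, or $(3c_i\mu_i+\mu_0)\mu_i<0$ for all $1\le i\le m$, then the (semi-Clifford) algebraic curvature tensor $R=\mu_0R^0+\sum_{i=1}^m\mu_iR^{J_i}$ is totally Jacobi-dual.
   Context: A scalar product space is a finite-dimensional real vector space with a nondegenerate symmetric bilinear form $g$; $\varepsilon_X=g(X,X)$. $R^0(X,Y,Z,W)=g(Y,Z)g(X,W)-g(X,Z)g(Y,W)$; for skew-adjoint $J$, $R^J(X,Y,Z,W)=g(JX,Z)g(JY,W)-g(JY,Z)g(JX,W)+2g(JX,Y)g(JZ,W)$. The Jacobi operator is $\mathcal{J}_X(Y)=\sum_{i}\varepsilon_{E_i}R(Y,X,X,E_i)E_i$ for an orthonormal basis $(E_i)$. An eigenvector of $\mathcal{J}_X$ is a nonzero $Y$ with $\mathcal{J}_X(Y)=\lambda Y$, $\lambda\in\mathbb{R}$. $R$ is totally Jacobi-dual if for all $X,Y\in\mathcal{V}$ with $X\neq0$: whenever $Y$ is an eigenvector of $\mathcal{J}_X$, then $X$ is an eigenvector of $\mathcal{J}_Y$. *)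

(* The scalar product space (V,g) is modelled as the row
   vectors 'rV[R]_n over a realType R, with g(x,y) = x G y^T for a symmetric
   invertible matrix G. Endomorphisms are matrices acting on the right:
   J(X) := X *m J, so (J1 o J2)(X) = X *m J2 *m J1. *)
From HB Require Import structures.
From mathcomp Require Import all_boot all_order all_algebra.
From mathcomp Require Import reals.
Set Implicit Arguments. Unset Strict Implicit. Unset Printing Implicit Defensive.
Import Order.TTheory GRing.Theory Num.Theory.
Local Open Scope ring_scope.

Section Defs.
Variables (R : realType) (n : nat).
Implicit Types (G J : 'M[R]_n) (X Y Z W : 'rV[R]_n).

Definition form G X Y : R := (X *m G *m Y^T) 0 0.

Definition scalar_product G : Prop := G^T = G /\ G \in unitmx.

Definition act J X : 'rV[R]_n := X *m J.

Definition skew_adjoint G J : Prop :=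
  forall X Y, form G (act J X) Y = - form G X (act J Y).

Definition R0 G X Y Z W : R :=
  form G Y Z * form G X W - form G X Z * form G Y W.

Definition RJ G J X Y Z W : R :=
  form G (act J X) Z * form G (act J Y) W
  - form G (act J Y) Z * form G (act J X) W
  + 2 * form G (act J X) Y * form G (act J Z) W.

(* Jacobi operator J_X(Y): the vector with g(J_X Y, W) = R(Y,X,X,W) for all W
   (index raising with g^{-1}; equals sum_i eps_i R(Y,X,X,E_i) E_i for any
   orthonormal basis E). *)
Definition jacobi G (Rt : 'rV[R]_n -> 'rV[R]_n -> 'rV[R]_n -> 'rV[R]_n -> R)
  X Y : 'rV[R]_n :=
  (\row_j Rt Y X X (delta_mx 0 j)) *m invmx G.

Definition eigenvector (A : 'rV[R]_n -> 'rV[R]_n) Y : Prop :=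
  Y != 0 /\ exists lambda : R, A Y = lambda *: Y.

Definition totally_jacobi_dual G
  (Rt : 'rV[R]_n -> 'rV[R]_n -> 'rV[R]_n -> 'rV[R]_n -> R) : Prop :=
  forall X Y, X != 0 -> eigenvector (jacobi G Rt X) Y ->
    eigenvector (jacobi G Rt Y) X.

End Defs.

(* Write J_X Y = mu0 (g(X,X) Y - g(X,Y) X) - 3 Z X with
   Z = sum_i mu_i g(Y, J_i X) J_i. Swapping X and Y negates Z, so
   J_Y X = mu0 (g(Y,Y) X - g(X,Y) Y) + 3 Z Y, and the Clifford relations give
   Z^2 = sigma id with sigma = sum_i c_i (mu_i g(Y, J_i X))^2.
   Applying Z to J_X Y = lambda Y expresses Z Y through X and Y whenever
   lambda <> mu0 g(X,X), and then X is an eigenvector of J_Y.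
   If lambda = mu0 g(X,X), then Z X = -(mu0 g(X,Y)/3) X; comparing Z^2 X = sigma X
   with g(Z X, Y) = sum_i mu_i g(Y, J_i X)^2 yields
   sum_i (3 c_i mu_i + mu0) mu_i g(Y, J_i X)^2 = 0, so the sign hypothesis forces
   Z = 0 and mu0 g(X,Y) = 0, and J_Y X = mu0 g(Y,Y) X. *)

From Pilot Require Import Defs.
From mathcomp Require Import all_boot all_order all_algebra.
From mathcomp Require Import reals.
From mathcomp Require Import ring lra.
Set Implicit Arguments. Unset Strict Implicit. Unset Printing Implicit Defensive.
Import Order.TTheory GRing.Theory Num.Theory.
Local Open Scope ring_scope.

Section CliffordSquare.
Variables (F : numFieldType) (n m : nat) (J : 'I_m -> 'M[F]_n) (c : 'I_m -> F).
Hypothesis J_anticomm :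
  forall i j, J j *m J i + J i *m J j = (2 * c i * (i == j)%:R)%:M.

Lemma clifford_sqr (x : 'I_m -> F) :
  (\sum_i x i *: J i) *m (\sum_i x i *: J i) = (\sum_i c i * x i ^+ 2)%:M.
Proof.
set S := _ *m _.
have eS : S = \sum_i \sum_j (x i * x j) *: (J i *m J j).
  rewrite /S mulmx_suml; apply: eq_bigr => i _.
  rewrite mulmx_sumr; apply: eq_bigr => j _.
  by rewrite -scalemxAl -scalemxAr scalerA.
have eS' : S = \sum_i \sum_j (x i * x j) *: (J j *m J i).
  rewrite eS exchange_big; apply: eq_bigr => i _; apply: eq_bigr => j _.
  by rewrite mulrC.
have S2 : S *+ 2 = (\sum_i 2 * c i * x i ^+ 2)%:M.
  rewrite mulr2n {1}eS eS' -big_split raddf_sum; apply: eq_bigr => i _ /=.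
  rewrite -big_split (bigD1 i) //= big1 => [|j /negPf ij]; last first.
    by rewrite -scalerDr J_anticomm ij mulr0 raddf0 scaler0.
  by rewrite -scalerDr J_anticomm eqxx addr0 -scalemx1 scalerA scalemx1 mulr1 mulrC mulrA.
have two0 : (2 : F) != 0 by rewrite pnatr_eq0.
apply: (scalerI two0); rewrite -scalemx1 scalerA scalemx1 mulr_sumr scaler_nat S2.
by congr (_%:M); apply: eq_bigr => i _; rewrite !mulrA.
Qed.

End CliffordSquare.

Lemma sum_sign_definite_eq0 (F : realDomainType) (I : finType) (w a : I -> F) :
  (forall i, 0 < w i) \/ (forall i, w i < 0) ->
  \sum_i w i * a i ^+ 2 = 0 -> forall i, a i = 0.
Proof.
move=> w_sign; wlog w_pos : w w_sign / forall i, 0 < w i.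
  move=> pos_case; case: (w_sign) => [|w_neg sum0]; first exact: pos_case.
  have w_pos i : 0 < - w i by rewrite oppr_gt0.
  apply: (pos_case (fun i => - w i)); [by left | by [] |].
  by under eq_bigr do rewrite mulNr; rewrite sumrN sum0 oppr0.
move=> sum0 i; have wa_ge0 j : true -> 0 <= w j * a j ^+ 2.
  by rewrite mulr_ge0 ?sqr_ge0 ?ltW.
have /eqP := psumr_eq0P wa_ge0 sum0 (i := i) isT.
by rewrite mulf_eq0 sqrf_eq0 gt_eqF ?w_pos //= => /eqP.
Qed.

Lemma sqr_eigenvalue (F : fieldType) n (X : 'rV[F]_n) (Z : 'M[F]_n) (a s : F) :
  X != 0 -> X *m Z = a *: X -> Z *m Z = s%:M -> s = a ^+ 2.
Proof.
move=> X0 XZ ZZ; have : X *m (Z *m Z) = s *: X by rewrite ZZ mul_mx_scalar.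
rewrite mulmxA XZ -scalemxAl XZ scalerA -expr2 => /eqP.
by rewrite eq_sym -subr_eq0 -scalerBl scaler_eq0 (negPf X0) orbF subr_eq0 => /eqP.
Qed.

Lemma eigen_dual_generic (F : numFieldType) n (X Y : 'rV[F]_n) (Z : 'M[F]_n)
    (mu0 eps p q lam s : F) :
  Z *m Z = s%:M -> lam != mu0 * eps ->
  mu0 *: (eps *: Y - p *: X) - 3 *: (X *m Z) = lam *: Y ->
  mu0 *: (q *: X - p *: Y) + 3 *: (Y *m Z)
    = (mu0 * q + (mu0 ^+ 2 * p ^+ 2 - 9 * s) / (lam - mu0 * eps)) *: X.
Proof.
move=> ZZ; rewrite -subr_eq0 => k0 eigXY.
have eigXYZ : mu0 *: (eps *: (Y *m Z) - p *: (X *m Z)) - 3 *: (s *: X)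
              = lam *: (Y *m Z).
  move/(congr1 (mulmx^~ Z)): eigXY.
  by rewrite /= mulmxBl -!scalemxAl mulmxBl -!scalemxAl -mulmxA ZZ mul_mx_scalar.
move: (X *m Z) (Y *m Z) eigXY eigXYZ => u v eigXY eigXYZ.
apply/rowP => j; move/rowP/(_ j): eigXY; move/rowP/(_ j): eigXYZ; rewrite !mxE.
move: (X 0 j) (Y 0 j) (u 0 j) (v 0 j) => x y uj vj ev eu.
have {}eu : uj = (mu0 * (eps * y - p * x) - lam * y) / 3 by rewrite -eu; field.
have {}ev : vj = (- (mu0 * p * uj) - 3 * s * x) / (lam - mu0 * eps).
  apply: (mulfI k0); rewrite [RHS]mulrC divfK // mulrBl -ev; ring.
by rewrite ev eu; field.
Qed.

Section Jacobi.
Variables (R : realType) (n : nat) (G : 'M[R]_n).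
Local Notation g := (Defs.form G).
Implicit Types X Y W : 'rV[R]_n.

Lemma formDl X X' Y : g (X + X') Y = g X Y + g X' Y.
Proof. by rewrite /Defs.form !mulmxDl mxE. Qed.

Lemma formZl a X Y : g (a *: X) Y = a * g X Y.
Proof. by rewrite /Defs.form -!scalemxAl mxE. Qed.

Lemma formNl X Y : g (- X) Y = - g X Y.
Proof. by rewrite -scaleN1r formZl mulN1r. Qed.

Lemma form_suml (I : Type) (r : seq I) (P : pred I) (F : I -> 'rV[R]_n) Y :
  g (\sum_(i <- r | P i) F i) Y = \sum_(i <- r | P i) g (F i) Y.
Proof. by rewrite /Defs.form !mulmx_suml summxE. Qed.

Hypothesis G_sym : G^T = G.

Lemma form_sym X Y : g X Y = g Y X.
Proof.
rewrite /Defs.form.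
have -> : (Y *m G *m X^T) 0 0 = ((Y *m G *m X^T)^T) 0 0 by rewrite [RHS]mxE.
by rewrite !trmx_mul trmxK G_sym mulmxA.
Qed.

Hypothesis G_unit : G \in unitmx.

Lemma jacobi_eq_form (Rt : 'rV[R]_n -> 'rV[R]_n -> 'rV[R]_n -> 'rV[R]_n -> R) X Y V :
  (forall W, Rt Y X X W = g V W) -> jacobi G Rt X Y = V.
Proof.
move=> RtV; rewrite /jacobi -[RHS](mulmxK G_unit); congr (_ *m _).
by apply/rowP => j; rewrite mxE RtV /Defs.form trmx_delta -colE mxE.
Qed.

Variables (m : nat) (J : 'I_m -> 'M[R]_n) (c : 'I_m -> R) (mu0 : R) (mu : 'I_m -> R).
Hypothesis J_skew : forall i, skew_adjoint G (J i).
Hypothesis J_anticomm :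
  forall i j, J j *m J i + J i *m J j = (2 * c i * (i == j)%:R)%:M.

Definition Rmu X Y Z W : R :=
  mu0 * R0 G X Y Z W + \sum_(i < m) mu i * RJ G (J i) X Y Z W.

Definition Jcomb X Y : 'M[R]_n := \sum_i (mu i * g Y (X *m J i)) *: J i.

Lemma skew_formxx i X : g (X *m J i) X = 0.
Proof.
have := J_skew i X X; rewrite /act (form_sym X) => /eqP.
by rewrite -addr_eq0 -mulr2n mulrn_eq0 => /eqP.
Qed.

Lemma jacobiE X Y :
  jacobi G Rmu X Y = mu0 *: (g X X *: Y - g X Y *: X) - 3 *: (X *m Jcomb X Y).
Proof.
apply: jacobi_eq_form => W.
rewrite formDl formNl !formZl formDl formNl !formZl /Jcomb mulmx_sumr form_suml.
rewrite mulr_sumr -sumrN /Rmu; congr (_ + _); first by rewrite /R0 (form_sym X Y); ring.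
apply: eq_bigr => i _.
rewrite -scalemxAr formZl /RJ /act skew_formxx J_skew; ring.
Qed.

Lemma Jcomb_antisym X Y : Jcomb Y X = - Jcomb X Y.
Proof.
rewrite /Jcomb -sumrN; apply: eq_bigr => i _.
by rewrite form_sym J_skew mulrN scaleNr.
Qed.

Lemma Jcomb_sqr X Y :
  Jcomb X Y *m Jcomb X Y = (\sum_i c i * (mu i * g Y (X *m J i)) ^+ 2)%:M.
Proof. exact: clifford_sqr. Qed.

Lemma form_Jcomb X Y :
  g (X *m Jcomb X Y) Y = \sum_i mu i * g Y (X *m J i) ^+ 2.
Proof.
rewrite /Jcomb mulmx_sumr form_suml; apply: eq_bigr => i _.
by rewrite -scalemxAr formZl (form_sym _ Y) expr2 mulrA.
Qed.

Hypothesis mu_sign : (forall i, 0 < (3 * c i * mu i + mu0) * mu i) \/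
                     (forall i, (3 * c i * mu i + mu0) * mu i < 0).

Lemma jacobi_dual_degenerate X Y :
  X != 0 -> jacobi G Rmu X Y = (mu0 * g X X) *: Y ->
  Jcomb X Y = 0 /\ mu0 * g X Y = 0.
Proof.
move=> X0; rewrite jacobiE; set p := g X Y => eigXY.
have XZ : X *m Jcomb X Y = (- (mu0 * p / 3)) *: X.
  apply/rowP => j; move/rowP/(_ j): eigXY; rewrite !mxE => e; lra.
have sig := sqr_eigenvalue X0 XZ (Jcomb_sqr X Y).
have s1 := form_Jcomb X Y; rewrite XZ formZl -/p in s1.
have a0 : forall i, g Y (X *m J i) = 0.
  apply: (sum_sign_definite_eq0 mu_sign).
  have -> : \sum_i (3 * c i * mu i + mu0) * mu i * g Y (X *m J i) ^+ 2 =
      3 * (\sum_i c i * (mu i * g Y (X *m J i)) ^+ 2)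
      + mu0 * (\sum_i mu i * g Y (X *m J i) ^+ 2).
    by rewrite !mulr_sumr -big_split /=; apply: eq_bigr => i _; ring.
  by rewrite sig -s1; field.
have Z0 : Jcomb X Y = 0 by rewrite /Jcomb big1 // => i _; rewrite a0 mulr0 scale0r.
split=> //; move: XZ; rewrite Z0 mulmx0 => /esym/eqP.
by rewrite scaler_eq0 (negPf X0) orbF oppr_eq0 mulf_eq0 invr_eq0 pnatr_eq0 orbF => /eqP.
Qed.

Lemma Rmu_totally_jacobi_dual : totally_jacobi_dual G Rmu.
Proof.
move=> X Y X0 [Y0 [lam eigXY]]; split=> //.
rewrite jacobiE Jcomb_antisym mulmxN scalerN opprK (form_sym Y X).
have [lamE|lam_ne] := eqVneq lam (mu0 * g X X).
  rewrite lamE in eigXY; have [-> p0] := jacobi_dual_degenerate X0 eigXY.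
  exists (mu0 * g Y Y).
  by rewrite mulmx0 scaler0 addr0 scalerBr !scalerA p0 scale0r subr0.
rewrite jacobiE in eigXY.
by eexists; exact: eigen_dual_generic (Jcomb_sqr X Y) lam_ne eigXY.
Qed.

End Jacobi.

Theorem mainTheorem6 (R : realType) (n m : nat) (G : 'M[R]_n)
  (J : 'I_m -> 'M[R]_n) (c : 'I_m -> R) (mu0 : R) (mu : 'I_m -> R) :
  scalar_product G ->
  (forall i, skew_adjoint G (J i)) ->
  (forall i, c i = 1 \/ c i = -1) ->
  (forall i j, J j *m J i + J i *m J j = (2 * c i * (i == j)%:R)%:M) ->
  ((forall i, 0 < (3 * c i * mu i + mu0) * mu i) \/
   (forall i, (3 * c i * mu i + mu0) * mu i < 0)) ->
  totally_jacobi_dual G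
    (fun X Y Z W => mu0 * R0 G X Y Z W + \sum_(i < m) mu i * RJ G (J i) X Y Z W).
Proof.
move=> [G_sym G_unit] J_skew _ J_anticomm mu_sign.
exact: (Rmu_totally_jacobi_dual G_sym G_unit J_skew J_anticomm mu_sign).
Qed.
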